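(* Let $\pi$ be an irreducible $\psi$-generic representation of $\mathrm{SO}_{2l}$ and let $W\in\mathcal W(\pi,\psi)$ with $W(I_{2l})=1$. Then $W_m\in\mathcal W(\pi,\psi)$ for every integer $m\ge1$.
   Context: $F$ is a non-Archimedean local field of characteristic $0$, with maximal ideal $\mathfrak p$, uniformizer $\varpi$, and a nontrivial unramified additive character $\psi$. $J_n$ is the antidiagonal matrix of $1$'s. $\rho\in F^\times$ is a non-square, and $J_{2l,\rho}=\mathrm{diag}(I_{l-1},\begin{pmatrix}0&1\\-\rho&0\end{pmatrix},I_{l-1})J_{2l}$. Then $\mathrm{SO}_{2l}=\{g\in\mathrm{GL}_{2l}(F):\det g=1,{}^tgJ_{2l,\rho}g=J_{2l,\rho}\}$, with upper unipotent subgroup $U$ and generic character $\psi(u)=\psi(\sum_{i=1}^{l-2}u_{i,i+1}+\frac12u_{l-1,l+1})$. $\pi$ is $\psi$-generic if $\mathrm{Hom}_U(\pi,\psi)\ne0$. For a fixed nonzero $\Gamma$ in this space, $\mathcal W(\pi,\psi)=\{g\mapsto\Gamma(\pi(g)v):v\in\pi\}$. Let $K_m=(I_{2l}+\mathrm{Mat}_{2l}(\mathfrak p^m))\cap\mathrm{SO}_{2l}$, $\tau_m(k)=\psi(\varpi^{-2m}(\sum_{i=1}^{l-2}k_{i,i+1}+\frac12k_{l-1,l+1}))$, $e_m=\mathrm{diag}(\varpi^{-2m(l-1)},\dots,\varpi^{-2m},1,1,\varpi^{2m},\dots,\varpi^{2m(l-1)})$, $H_m=e_mK_me_m^{-1}$,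 $\psi_m(h)=\tau_m(e_m^{-1}he_m)$ and $U_m=U\cap H_m$. Then $W_m(g)=\mathrm{Vol}(U_m)^{-1}\int_{U_m}\psi_m^{-1}(u)W(gu)du$. *)

From HB Require Import structures.
From mathcomp Require Import all_boot all_order all_algebra.
From mathcomp Require Import complex reals.
Set Implicit Arguments. Unset Strict Implicit. Unset Printing Implicit Defensive.
Import Order.TTheory GRing.Theory Num.Theory.
Local Open Scope ring_scope.

(* ord x is the valuation of x (its value at 0 is irrelevant).         *)
Section LocalField.
Variable F : fieldType.
Variable ord : F -> int.

Definition inPow (m : int) (x : F) : Prop := x = 0 \/ m <= ord x.
Definition inO (x : F) : Prop := inPow 0 x.

Definition is_discrete_valuation : Prop :=
  (forall x y, x != 0 -> y != 0 -> ord (x * y) = ord x + ord y) /\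
  (forall x y, x != 0 -> y != 0 -> x + y != 0 ->
      Num.min (ord x) (ord y) <= ord (x + y)) /\
  (exists w : F, w != 0 /\ ord w = 1).

Definition finite_residue_field : Prop :=
  exists s : seq F, (forall y, y \in s -> inO y) /\
    forall x, inO x -> exists2 y, y \in s & inPow 1 (x - y).

Definition complete_field : Prop :=
  forall a : nat -> F,
    (forall N : int, exists M, forall n k, (M <= n)%N -> (M <= k)%N -> inPow N (a n - a k)) ->
    exists L, forall N : int, exists M, forall n, (M <= n)%N -> inPow N (a n - L).

Definition nonarch_local_field_char0 : Prop :=
  is_discrete_valuation /\ finite_residue_field /\ complete_field /\ [pchar F] =i pred0.

Definition uniformizer (w : F) : Prop := w != 0 /\ ord w = 1.

Definition unram_add_char (C : fieldType) (psi : F -> C) : Prop :=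
  (forall x y, psi (x + y) = psi x * psi y) /\
  (forall x, inO x -> psi x = 1) /\
  (exists x, inPow (-1) x /\ psi x != 1).

Definition nonsquare (rho : F) : Prop := rho != 0 /\ ~ exists x, x * x = rho.
End LocalField.

(* The quasi-split group SO_{2l} (0-based matrix indices).             *)
Section SO.
Variable F : fieldType.
Variable l : nat.
Notation n := (l.*2).

Definition Jmat : 'M[F]_n := \matrix_(i, j) (((i + j)%N == n.-1)%:R).
(* diag(I_{l-1}, [[0,1],[-rho,0]], I_{l-1}) *)
Definition Dmat (rho : F) : 'M[F]_n := \matrix_(i, j)
  (if (i == j :> nat) && (((i < l.-1)%N) || ((l < i)%N)) then 1
   else if (i == l.-1 :> nat) && (j == l :> nat) then 1
   else if (i == l :> nat) && (j == l.-1 :> nat) then - rho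
   else 0).
Definition Jrho (rho : F) : 'M[F]_n := Dmat rho *m Jmat.

Definition inSO (rho : F) (g : 'M[F]_n) : Prop :=
  \det g = 1 /\ g^T *m Jrho rho *m g = Jrho rho.

Definition upper_unipotent (g : 'M[F]_n) : Prop :=
  (forall i j : 'I_n, (j < i)%N -> g i j = 0) /\ (forall i : 'I_n, g i i = 1).

Definition inU (rho : F) (u : 'M[F]_n) : Prop := inSO rho u /\ upper_unipotent u.

(* sum_{i=1}^{l-2} u_{i,i+1} + 1/2 u_{l-1,l+1}  (1-based indices) *)
Definition gen_arg (u : 'M[F]_n) : F :=
  \sum_(i < n) \sum_(j < n | ((i < l - 2)%N && (j == i.+1 :> nat))) u i j
  + 2^-1 * \sum_(i < n) \sum_(j < n | ((i == (l - 2)%N :> nat) && (j == l :> nat))) u i j.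

Definition psiU (C : fieldType) (psi : F -> C) (u : 'M[F]_n) : C := psi (gen_arg u).

Definition inK (ord : F -> int) (rho : F) (m : nat) (g : 'M[F]_n) : Prop :=
  inSO rho g /\ forall i j, inPow ord (m%:Z) ((g - 1%:M) i j).

Definition tau (C : fieldType) (psi : F -> C) (w : F) (m : nat) (k : 'M[F]_n) : C :=
  psi (w ^- (2 * m) * gen_arg k).

Definition emat (w : F) (m : nat) : 'M[F]_n :=
  diag_mx (\row_(i < n) (if (i < l)%N then w ^- (2 * m * (l.-1 - i))
                         else w ^+ (2 * m * (i - l)))).

Definition inH ord rho w m (h : 'M[F]_n) : Prop :=
  inK ord rho m (invmx (emat w m) *m h *m emat w m).

Definition psi_m (C : fieldType) (psi : F -> C) w m (h : 'M[F]_n) : C :=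
  tau psi w m (invmx (emat w m) *m h *m emat w m).

Definition inUm ord rho w m (u : 'M[F]_n) : Prop := inU rho u /\ inH ord rho w m u.

Definition loc_const (C : Type) ord rho (P : 'M[F]_n -> Prop) (f : 'M[F]_n -> C) : Prop :=
  exists k : nat, forall u g, P u -> inK ord rho k g -> P (u *m g) -> f (u *m g) = f u.

(* I is the normalized Haar integral  Vol(P)^{-1} \int_P (.) du  on the
   compact open subgroup P, i.e. the normalized left-invariant positive
   linear functional on the (locally constant) functions on P. *)
Definition normalized_haar (C : numFieldType) ord rho (P : 'M[F]_n -> Prop)
  (I : ('M[F]_n -> C) -> C) : Prop :=
  (forall f g a, loc_const ord rho P f -> loc_const ord rho P g ->
      I (fun u => a * f u + g u) = a * I f + I g) /\
  (forall f g, (forall u, P u -> f u = g u) -> I f = I g) /\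
  (forall f x, loc_const ord rho P f -> P x -> I (fun u => f (x *m u)) = I f) /\
  (forall f, loc_const ord rho P f -> (forall u, P u -> 0 <= f u) -> 0 <= I f) /\
  I (fun _ => 1) = 1.

Definition is_smooth_irrep (C : fieldType) (V : lmodType C) ord rho
  (pi : 'M[F]_n -> V -> V) : Prop :=
  (forall g a v v', inSO rho g -> pi g (a *: v + v') = a *: pi g v + pi g v') /\
  (forall v, pi 1%:M v = v) /\
  (forall g h v, inSO rho g -> inSO rho h -> pi (g *m h) v = pi g (pi h v)) /\
  (forall v, exists k : nat, forall g, inK ord rho k g -> pi g v = v) /\
  (exists v : V, v != 0) /\
  (forall S : V -> Prop, S 0 -> (forall a v v', S v -> S v' -> S (a *: v + v')) ->
     (forall g v, inSO rho g -> S v -> S (pi g v)) ->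
     (forall v, S v -> v = 0) \/ (forall v, S v)).

Definition whittaker_functional (C : fieldType) (V : lmodType C) rho
  (psi : F -> C) (pi : 'M[F]_n -> V -> V) (Gamma : V -> C) : Prop :=
  (forall a v v', Gamma (a *: v + v') = a * Gamma v + Gamma v') /\
  (forall u v, inU rho u -> Gamma (pi u v) = psiU psi u * Gamma v) /\
  (exists v, Gamma v != 0).

Definition in_whittaker_model (C : fieldType) (V : lmodType C) rho
  (pi : 'M[F]_n -> V -> V) (Gamma : V -> C) (W : 'M[F]_n -> C) : Prop :=
  exists v : V, forall g, inSO rho g -> W g = Gamma (pi g v).

End SO.

From HB Require Import structures.
From mathcomp Require Import all_boot all_order all_algebra.
From mathcomp Require Import complex reals.
From mathcomp Require Import zify ring.
From Stdlib Require Import Classical.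
Set Implicit Arguments. Unset Strict Implicit. Unset Printing Implicit Defensive.
Import Order.TTheory GRing.Theory Num.Theory.
Local Open Scope ring_scope.

(* On U_m, which is bounded, u |-> (psi_m(u), pi(u)v) is uniformly locally constant:
   psi_m because it is psi of an additive function of the entries of u and psi is
   trivial on O, and pi(u)v because pi(u)^-1 pi(u') = pi(u^-1 u') fixes v as soon as
   u^-1 u' lies in a small K_k (u^-1 is the adjugate of u, hence stays bounded).
   Covering U_m by finitely many residue-class boxes, the map takes finitely many
   values (c_s, v_s), so the Haar integral defining W_m(g) is the finite sum
   sum_s vol_s c_s^-1 Gamma(pi(g) v_s) = Gamma(pi(g) (sum_s vol_s c_s^-1 v_s)). *)

Lemma finite_image_of_net (A : Type) (C T : eqType) (P : A -> Prop)
    (near : C -> A -> Prop) (phi : A -> T) (S : seq C) :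
  (forall c u u', P u -> P u' -> near c u -> near c u' -> phi u = phi u') ->
  (forall u, P u -> exists2 c, c \in S & near c u) ->
  exists vals : seq T, forall u, P u -> phi u \in vals.
Proof.
move=> phi_near coverS.
suff [vals hvals] : exists vals : seq T,
    forall u c, P u -> c \in S -> near c u -> phi u \in vals.
  by exists vals => u Pu; have [c cS cu] := coverS u Pu; apply: hvals cu.
elim: S {coverS} => [|c S [vals hvals]]; first by exists [::].
have [[u0 [Pu0 cu0]]|no_u0] := classic (exists u0, P u0 /\ near c u0).
- exists (phi u0 :: vals) => u c' Pu; rewrite inE => /orP[/eqP-> cu|c'S c'u].
    by rewrite (phi_near c u u0) ?mem_head.
  by rewrite in_cons (hvals u c') ?orbT.
- exists vals => u c' Pu; rewrite inE => /orP[/eqP-> cu|]; last exact: hvals.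
  by case: no_u0; exists u.
Qed.

Section Valuation.
Variables (F : fieldType) (ord : F -> int).
Hypothesis hv : is_discrete_valuation ord.

Lemma valuation1 : ord 1 = 0.
Proof. by have := proj1 hv 1 1 (oner_neq0 _) (oner_neq0 _); rewrite mulr1; lia. Qed.

Lemma valuationN x : x != 0 -> ord (- x) = ord x.
Proof.
move=> x0; have m10 : (-1 : F) != 0 by rewrite oppr_eq0 oner_neq0.
have ordN1 : ord (-1) = 0.
  by have := proj1 hv _ _ m10 m10; rewrite mulrNN mulr1 valuation1; lia.
by rewrite -mulN1r (proj1 hv) // ordN1 add0r.
Qed.

Lemma valuationV x : x != 0 -> ord x^-1 = - ord x.
Proof.
by move=> x0; have := proj1 hv _ _ x0 (invr_neq0 x0); rewrite mulfV // valuation1; lia.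
Qed.

Lemma valuation_expz w : uniformizer ord w -> forall z : int, ord (w ^ z) = z.
Proof.
move=> [w0 w1].
have ordX (n : nat) : ord (w ^+ n) = n.
  elim: n => [|n IH]; first by rewrite expr0 valuation1.
  by rewrite exprS (proj1 hv) ?expf_neq0 // w1 IH; lia.
by case=> n; rewrite ?NegzE -?exprnN ?valuationV ?expf_neq0 // ordX; lia.
Qed.

Lemma inPow_le a b x : b <= a -> inPow ord a x -> inPow ord b x.
Proof. by move=> ba [->|ax]; [left | right; apply: le_trans ax]. Qed.

Lemma inPow0 a : inPow ord a 0.
Proof. by left. Qed.

Lemma inPow_ord x : inPow ord (ord x) x.
Proof. by right. Qed.

Lemma inPow1 : inPow ord 0 1.
Proof. by right; rewrite valuation1. Qed.

Lemma inPowM a b x y : inPow ord a x -> inPow ord b y -> inPow ord (a + b) (x * y).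
Proof.
move=> [->|ax]; first by rewrite mul0r; left.
move=> [->|ay]; first by rewrite mulr0; left.
have [->|x0] := eqVneq x 0; first by rewrite mul0r; left.
have [->|y0] := eqVneq y 0; first by rewrite mulr0; left.
by right; rewrite (proj1 hv) // lerD.
Qed.

Lemma inPowD a x y : inPow ord a x -> inPow ord a y -> inPow ord a (x + y).
Proof.
move=> [->|ax]; first by rewrite add0r.
move=> [->|ay]; first by rewrite addr0; right.
have [->|x0] := eqVneq x 0; first by rewrite add0r; right.
have [->|y0] := eqVneq y 0; first by rewrite addr0; right.
have [->|s0] := eqVneq (x + y) 0; first by left.
right.
by apply: le_trans (proj1 (proj2 hv) x y x0 y0 s0); rewrite le_min ax ay.
Qed.

Lemma inPowN a x : inPow ord a x -> inPow ord a (- x).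
Proof.
move=> [->|ax]; first by rewrite oppr0; left.
have [->|x0] := eqVneq x 0; first by rewrite oppr0; left.
by right; rewrite valuationN.
Qed.

Lemma inPowB a x y : inPow ord a x -> inPow ord a y -> inPow ord a (x - y).
Proof. by move=> ax ay; apply: inPowD ax (inPowN ay). Qed.

Lemma inPow_sum a (I : Type) (r : seq I) (P : pred I) (f : I -> F) :
  (forall i, P i -> inPow ord a (f i)) -> inPow ord a (\sum_(i <- r | P i) f i).
Proof. by move=> af; apply: big_ind => //; [apply: inPow0 | apply: inPowD]. Qed.

Lemma inPow_prod a k (f : 'I_k -> F) :
  (forall i, inPow ord a (f i)) -> inPow ord (k%:Z * a) (\prod_(i < k) f i).
Proof.
elim: k f => [|k IH] f af; first by rewrite big_ord0 mul0r; apply: inPow1.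
by rewrite big_ord_recr intS mulrDl mul1r [a + _]addrC; apply: inPowM; first apply: IH.
Qed.

Lemma inPow_sign (k : nat) : inPow ord 0 ((-1) ^+ k).
Proof. by rewrite -signr_odd; case: (odd k); rewrite ?expr1; [apply: inPowN|]; apply: inPow1. Qed.

Definition mx_inPow p q (a : int) (A : 'M[F]_(p, q)) := forall i j, inPow ord a (A i j).

Lemma mx_inPow_le p q a b (A : 'M[F]_(p, q)) : b <= a -> mx_inPow a A -> mx_inPow b A.
Proof. by move=> ba aA i j; apply: inPow_le ba (aA i j). Qed.

Lemma mx_inPowB p q a (A B : 'M[F]_(p, q)) :
  mx_inPow a A -> mx_inPow a B -> mx_inPow a (A - B).
Proof. by move=> aA aB i j; rewrite !mxE; apply: inPowB. Qed.

Lemma mx_inPowM p q r a b (A : 'M[F]_(p, q)) (B : 'M[F]_(q, r)) :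
  mx_inPow a A -> mx_inPow b B -> mx_inPow (a + b) (A *m B).
Proof. by move=> aA bB i j; rewrite mxE; apply: inPow_sum => k _; apply: inPowM. Qed.

Lemma inPow_det k a (M : 'M[F]_k) : mx_inPow a M -> inPow ord (k%:Z * a) (\det M).
Proof.
move=> aM; apply: inPow_sum => s _; rewrite -[_ * a]add0r.
by apply: inPowM; [apply: inPow_sign | apply: inPow_prod].
Qed.

Lemma mx_inPow_adj k a (M : 'M[F]_k) : mx_inPow a M -> mx_inPow (k.-1%:Z * a) (\adj M).
Proof.
move=> aM i j; rewrite mxE /cofactor -[_ * a]add0r.
by apply: inPowM; [apply: inPow_sign | apply: inPow_det => i' j'; rewrite !mxE].
Qed.

Lemma mx_inPow_bound p q (M : 'M[F]_(p, q)) : exists a, mx_inPow a M.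
Proof.
exists (\big[Num.min/0]_(ij : 'I_p * 'I_q) ord (M ij.1 ij.2)) => i j; right.
exact: (bigmin_le _ (i, j) (fun ij : 'I_p * 'I_q => ord (M ij.1 ij.2))).
Qed.

Hypothesis hres : finite_residue_field ord.

Lemma inPow_net B (d : nat) : exists reps : seq F,
  forall x, inPow ord B x -> exists2 r, r \in reps & inPow ord (B + d%:Z) (x - r).
Proof.
have [w w0 w1] : exists2 w : F, w != 0 & ord w = 1 by case: hv => _ [_ [w [? ?]]]; exists w.
have ordw := valuation_expz (conj w0 w1).
have [s [_ covers]] := hres.
elim: d => [|d [reps hreps]].
  have -> : B + 0%:Z = B by lia.
  by exists [:: 0] => x Bx; exists 0; rewrite ?mem_head // subr0.
pose N := B + d%:Z.
exists [seq r + t * w ^ N | r <- reps, t <- s] => x Bx.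
have [r rin xr] := hreps x Bx.
pose y := (x - r) * w ^ (- N).
have Oy : inO ord y.
  rewrite /inO -(subrr N) /y; apply: inPowM => //.
  by rewrite -{1}(ordw (- N)); apply: inPow_ord.
have [t tin yt] := covers y Oy.
exists (r + t * w ^ N); first by apply/allpairsP; exists (r, t).
have -> : x - (r + t * w ^ N) = (y - t) * w ^ N.
  by rewrite /y mulrBl -mulrA -expfzDr // addNr expr0z mulr1; ring.
have -> : B + d.+1%:Z = 1 + N by rewrite /N; lia.
apply: inPowM => //; rewrite -{1}(ordw N); exact: inPow_ord.
Qed.

Lemma mx_inPow_net p q B (d : nat) : exists S : seq 'M[F]_(p, q),
  forall u, mx_inPow B u -> exists2 M, M \in S & mx_inPow (B + d%:Z) (u - M).
Proof.
have [reps covers] := inPow_net B d.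
exists [seq \matrix_(i, j) reps`_(t (i, j)) | t : {ffun 'I_p * 'I_q -> 'I_(size reps)}] => u Bu.
have /fin_all_exists [t ut] : forall ij : 'I_p * 'I_q,
    exists k : 'I_(size reps), inPow ord (B + d%:Z) (u ij.1 ij.2 - reps`_k).
  move=> [i j]; have [r rin ur] := covers _ (Bu i j).
  have ir : (index r reps < size reps)%N by rewrite index_mem.
  by exists (Ordinal ir); rewrite nth_index.
exists (\matrix_(i, j) reps`_(finfun t (i, j))); first exact: image_f.
by move=> i j; rewrite !mxE ffunE; apply: (ut (i, j)).
Qed.

Lemma finite_image_of_uniformly_locally_constant (T : eqType) p q
    (P : 'M[F]_(p, q) -> Prop) (phi : 'M[F]_(p, q) -> T) B N :
  (forall u, P u -> mx_inPow B u) ->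
  (forall u u', P u -> P u' -> mx_inPow N (u' - u) -> phi u' = phi u) ->
  exists vals : seq T, forall u, P u -> phi u \in vals.
Proof.
move=> PB phiN; have [S coverS] := mx_inPow_net p q B (absz (N - B)).
apply: (@finite_image_of_net _ _ _ P (fun M u => mx_inPow N (u - M)) phi S).
- move=> M u u' Pu Pu' uM u'M; apply/esym/phiN => //.
  have -> : u' - u = (u' - M) - (u - M) by rewrite opprB addrA subrK.
  exact: mx_inPowB.
- move=> u Pu; have [M MS uM] := coverS u (PB u Pu).
  by exists M => //; apply: mx_inPow_le uM; lia.
Qed.

End Valuation.

Section SpecialOrthogonal.
Variables (F : fieldType) (ord : F -> int) (l : nat) (rho : F).
Hypothesis hv : is_discrete_valuation ord.
Notation n := l.*2.
Notation mx_inPow := (mx_inPow ord).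

Lemma SO_mul (g h : 'M[F]_n) : inSO rho g -> inSO rho h -> inSO rho (g *m h).
Proof.
move=> [dg og] [dh oh]; split; first by rewrite det_mulmx dg dh mulr1.
have -> : (g *m h)^T *m Jrho l rho *m (g *m h) = h^T *m (g^T *m Jrho l rho *m g) *m h.
  by rewrite trmx_mul !mulmxA.
by rewrite og oh.
Qed.

Lemma SO_unit (g : 'M[F]_n) : inSO rho g -> g \in unitmx.
Proof. by move=> [dg _]; rewrite unitmxE dg unitr1. Qed.

Lemma SO_inv (g : 'M[F]_n) : inSO rho g -> inSO rho (invmx g).
Proof.
move=> gSO; have gU := SO_unit gSO; case: gSO => dg og; split.
  by rewrite det_inv dg invr1.
rewrite -{1}og !mulmxA -[(invmx g)^T *m _]trmx_mul mulmxV // trmx1 mul1mx.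
by rewrite -mulmxA mulmxV // mulmx1.
Qed.

Lemma SO_invmx_inPow a (g : 'M[F]_n) :
  inSO rho g -> mx_inPow a g -> mx_inPow (n.-1%:Z * a) (invmx g).
Proof.
move=> gSO ag; rewrite /invmx (SO_unit gSO) (proj1 gSO) invr1 scale1r.
exact: mx_inPow_adj.
Qed.

Lemma inK_inPow0 m (g : 'M[F]_n) : inK ord rho m g -> mx_inPow 0 g.
Proof.
move=> [_ gm] i j; rewrite -[g](subrK 1%:M) mxE.
apply: inPowD => //; first exact: inPow_le (gm i j).
by rewrite mxE; case: (i == j); [apply: inPow1 | apply: inPow0].
Qed.

Lemma emat_unit (w : F) m : w != 0 -> emat l w m \in unitmx.
Proof.
move=> w0; rewrite unitmxE det_diag unitfE; apply/prodf_neq0 => i _.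
by rewrite mxE; case: ifP => _; rewrite ?invr_eq0 expf_neq0.
Qed.

Lemma inH_bounded (w : F) m : w != 0 ->
  exists B, forall h : 'M[F]_n, inH ord rho w m h -> mx_inPow B h.
Proof.
move=> w0; have eU := emat_unit m w0; set e := emat l w m in eU *.
have [be eB] := mx_inPow_bound ord e; have [bi iB] := mx_inPow_bound ord (invmx e).
exists (be + 0 + bi) => h hH.
have -> : h = e *m (invmx e *m h *m e) *m invmx e.
  by rewrite !mulmxA mulmxV // mul1mx mulmxK.
by apply: mx_inPowM => //; apply: mx_inPowM => //; apply: inK_inPow0 hH.
Qed.

Lemma gen_argB (A B : 'M[F]_n) : gen_arg (A - B) = gen_arg A - gen_arg B.
Proof.
have sumB (P : 'I_n -> 'I_n -> bool) :
    \sum_i \sum_(j | P i j) (A - B) i j =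
    \sum_i \sum_(j | P i j) A i j - \sum_i \sum_(j | P i j) B i j.
  by rewrite -sumrB; apply: eq_bigr => i _; rewrite -sumrB; apply: eq_bigr => j _; rewrite !mxE.
by rewrite /gen_arg !sumB; ring.
Qed.

Lemma gen_arg_inPow a (D : 'M[F]_n) :
  mx_inPow a D -> inPow ord (a + Num.min 0 (ord 2^-1)) (gen_arg D).
Proof.
have ge_min0 b : b + Num.min 0 (ord 2^-1) <= b by rewrite gerDl ge_min lexx.
move=> aD; apply: (inPowD hv).
  by apply: inPow_le (ge_min0 a) _; apply: (inPow_sum hv) => i _; apply: (inPow_sum hv).
rewrite addrC; apply: (inPowM hv).
  by apply: inPow_le (inPow_ord _ _); rewrite ge_min lexx orbT.
by apply: (inPow_sum hv) => i _; apply: (inPow_sum hv).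
Qed.

Lemma unram_add_char_eq (C : fieldType) (psi : F -> C) x y :
  unram_add_char ord psi -> inO ord (x - y) -> psi x = psi y.
Proof. by move=> [psiD [psiO _]] Oxy; rewrite -(subrK y x) psiD psiO ?mul1r. Qed.

Lemma psi_m_locally_constant (C : fieldType) (psi : F -> C) w m :
  unram_add_char ord psi ->
  exists N, forall h h' : 'M[F]_n, mx_inPow N (h' - h) -> psi_m psi w m h' = psi_m psi w m h.
Proof.
move=> psi_unr; set e := emat l w m.
have [be eB] := mx_inPow_bound ord e; have [bi iB] := mx_inPow_bound ord (invmx e).
set c := Num.min 0 (ord (2^-1 : F)); set cw := ord (w ^- (2 * m)).
set N := - (bi + be + c + cw); exists N => h h' hh'.
apply: unram_add_char_eq psi_unr _.
rewrite /inO -mulrBr -gen_argB -mulmxBl -mulmxBr.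
apply: (@inPow_le _ _ (cw + (bi + N + be + c))); first by rewrite /N; lia.
apply: inPowM => //; first exact: inPow_ord.
by apply: gen_arg_inPow; apply: mx_inPowM => //; apply: mx_inPowM.
Qed.

Lemma orbit_locally_constant (V : Type) (pi : 'M[F]_n -> V -> V) v B :
  (forall g h v, inSO rho g -> inSO rho h -> pi (g *m h) v = pi g (pi h v)) ->
  (exists k : nat, forall g, inK ord rho k g -> pi g v = v) ->
  exists N, forall u u', inSO rho u -> inSO rho u' -> mx_inPow B u ->
    mx_inPow N (u' - u) -> pi u' v = pi u v.
Proof.
move=> piM [k fix_v]; set X := n.-1%:Z * B.
exists (k%:Z - X) => u u' uSO u'SO uB uu'; have uU := SO_unit uSO.
have gSO := SO_mul (SO_inv uSO) u'SO.
have gK : inK ord rho k (invmx u *m u').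
  split=> //; have -> : invmx u *m u' - 1%:M = invmx u *m (u' - u).
    by rewrite mulmxBr mulVmx.
  by rewrite -[k%:Z](subrK X) addrC; apply: mx_inPowM => //; apply: SO_invmx_inPow.
by rewrite -{1}(mulKVmx uU u') piM // fix_v.
Qed.

Lemma inUm_integrand_uniformly_locally_constant (C : fieldType) (psi : F -> C) (V : Type)
    (pi : 'M[F]_n -> V -> V) v w m :
  w != 0 -> unram_add_char ord psi ->
  (forall g h v, inSO rho g -> inSO rho h -> pi (g *m h) v = pi g (pi h v)) ->
  (exists k : nat, forall g, inK ord rho k g -> pi g v = v) ->
  exists B N, (forall u : 'M[F]_n, inUm ord rho w m u -> mx_inPow B u) /\
    forall u u', inUm ord rho w m u -> inUm ord rho w m u' -> mx_inPow N (u' - u) ->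
      (psi_m psi w m u', pi u' v) = (psi_m psi w m u, pi u v).
Proof.
move=> w0 psi_unr piM fix_v; have [B HB] := inH_bounded m w0.
have UmB (u : 'M[F]_n) : inUm ord rho w m u -> mx_inPow B u by case=> _ /HB.
have [N1 psiN] := psi_m_locally_constant w m psi_unr.
have [N2 piN] := orbit_locally_constant B piM fix_v.
exists B, (Num.max N1 N2); split=> // u u' Pu Pu' uu'; congr pair.
  by apply: psiN; apply: mx_inPow_le uu'; rewrite le_max lexx.
apply: piN (UmB u Pu) (mx_inPow_le _ uu'); first by case: Pu => [[]].
  by case: Pu' => [[]].
by rewrite le_max lexx orbT.
Qed.

Lemma loc_const_of_uniformly_locally_constant (T C : Type) (P : 'M[F]_n -> Prop)
    (phi : 'M[F]_n -> T) B N :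
  (forall u, P u -> mx_inPow B u) ->
  (forall u u', P u -> P u' -> mx_inPow N (u' - u) -> phi u' = phi u) ->
  forall H : T -> C, loc_const ord rho P (fun u => H (phi u)).
Proof.
move=> PB phiN H; exists (absz (N - B)) => u g Pu [_ gK] Pug; congr H.
apply: phiN => //; rewrite -{2}[u]mulmx1 -mulmxBr.
by apply: mx_inPow_le (mx_inPowM hv (PB u Pu) gK); lia.
Qed.

End SpecialOrthogonal.

Lemma map_lin_comb (K : pzRingType) (V X : lmodType K) (f : V -> X) :
  (forall a v v', f (a *: v + v') = a *: f v + f v') ->
  forall (I : Type) (r : seq I) (c : I -> K) (x : I -> V),
  f (\sum_(i <- r) c i *: x i) = \sum_(i <- r) c i *: f (x i).
Proof.
move=> f_lin I r c x; have f0 : f 0 = 0.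
  have := f_lin 1 0 0; rewrite scaler0 addr0 scale1r => f00.
  by apply: (@addrI _ (f 0)); rewrite -f00 addr0.
by elim: r => [|i r IH]; rewrite ?big_nil // !big_cons f_lin IH.
Qed.

Lemma integral_of_finite_range (C : pzRingType) (A : Type) (T : eqType)
    (P : A -> Prop) (lc : (A -> C) -> Prop) (I : (A -> C) -> C) (phi : A -> T) (vals : seq T) :
  (forall f g a, lc f -> lc g -> I (fun u => a * f u + g u) = a * I f + I g) ->
  (forall f g, (forall u, P u -> f u = g u) -> I f = I g) ->
  (forall H : T -> C, lc (fun u => H (phi u))) ->
  (forall u, P u -> phi u \in vals) ->
  forall G : T -> C, I (fun u => G (phi u)) =
    \sum_(s <- undup vals) G s * I (fun u => (phi u == s)%:R).
Proof.
move=> I_lin I_congr lc_phi phi_vals G.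
have I0 : I (fun _ => 0) = 0.
  have := I_lin _ _ 1 (lc_phi (fun _ => 0)) (lc_phi (fun _ => 0)).
  rewrite (I_congr _ (fun _ => 0)) => [|u _]; last by rewrite /= mulr0 addr0.
  rewrite mul1r => I00.
  by apply: (@addrI _ (I (fun _ => 0))); rewrite -I00 addr0.
rewrite (I_congr _ (fun u => \sum_(s <- undup vals) G s * (phi u == s)%:R)); last first.
  move=> u Pu; rewrite (bigD1_seq (phi u)) ?mem_undup ?undup_uniq ?phi_vals //=.
  by rewrite eqxx mulr1 big1 ?addr0 // => s /negbTE; rewrite eq_sym => ->; rewrite mulr0.
elim: (undup vals) => [|s r IH].
  by rewrite big_nil -I0; apply: I_congr => u _; rewrite big_nil.
rewrite big_cons -IH -I_lin; last 2 first.
- exact: (lc_phi (fun t => (t == s)%:R)).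
- exact: (lc_phi (fun t => \sum_(s <- r) G s * (t == s)%:R)).
by apply: I_congr => u _; rewrite big_cons.
Qed.

Theorem lemma4p3 (R : realType) (F : fieldType) (ord : F -> int)
  (w rho : F) (psi : F -> R[i]) (l : nat)
  (V : lmodType R[i]) (pi : 'M[F]_(l.*2) -> V -> V) (Gamma : V -> R[i])
  (W : 'M[F]_(l.*2) -> R[i]) (m : nat)
  (Im : ('M[F]_(l.*2) -> R[i]) -> R[i]) :
  nonarch_local_field_char0 ord ->
  uniformizer ord w ->
  unram_add_char ord psi ->
  nonsquare rho ->
  (2 <= l)%N ->
  is_smooth_irrep ord rho pi ->
  whittaker_functional rho psi pi Gamma ->
  in_whittaker_model rho pi Gamma W ->
  W 1%:M = 1 ->
  (1 <= m)%N ->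
  normalized_haar ord rho (inUm ord rho w m) Im ->
  in_whittaker_model rho pi Gamma
    (fun g => Im (fun u => (psi_m psi w m u)^-1 * W (g *m u))).
Proof.
move=> [hv [hres _]] [w0 _] psi_unr _ _ [pi_lin [_ [piM [pi_smooth _]]]] [Gamma_lin _]
  [v Wv] _ _ [Im_lin [Im_congr _]].
pose phi u := (psi_m psi w m u, pi u v).
have [B [N [PB phiN]]] :=
  inUm_integrand_uniformly_locally_constant hv m w0 psi_unr piM (pi_smooth v).
have [vals phi_vals] := finite_image_of_uniformly_locally_constant (phi := phi) hv hres PB phiN.
exists (\sum_(s <- undup vals) (Im (fun u => (phi u == s)%:R) * s.1^-1) *: s.2) => g gSO.
pose G s := s.1^-1 * Gamma (pi g s.2).
rewrite (Im_congr _ (fun u => G (phi u))); last first.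
  by move=> u [[uSO _] _]; rewrite Wv ?piM //; apply: SO_mul.
rewrite (integral_of_finite_range Im_lin Im_congr
  (loc_const_of_uniformly_locally_constant rho hv PB phiN) phi_vals G).
have pi_g_lin a v1 v2 : pi g (a *: v1 + v2) = a *: pi g v1 + pi g v2 by apply: pi_lin.
rewrite (map_lin_comb pi_g_lin) (map_lin_comb (X := R[i]^o) Gamma_lin).
by apply: eq_bigr => s _; rewrite mulrC mulrA.
Qed.
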